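(* Let $p>2$ be an integer, $\theta\in(0,1)$, $\eta\ge0$. For $\bm q\in\mathbb S^{n-1}$ let $\rho=\tfrac12\min_{1\le i\le n}\min\{\|\bm q-\bm e_i\|_2^2,\|\bm q+\bm e_i\|_2^2\}$. Then $$\rho\le\frac{C_{\eta,p}}{\theta(1-\theta)}\Big(\theta(1+\eta^2)^{p/2}+(1-\theta)\eta^p-\mathbb E_\Omega\big(\|\bm q_\Omega\|_2^2+\eta^2\big)^{p/2}\Big),$$ where $C_{\eta,p}=\big((1+\eta^2)^{p/2}+\eta^p-2(0.5+\eta^2)^{p/2}\big)^{-1}$.
   Context: $\bm e_i$ are the standard basis vectors of $\mathbb R^n$. $\Omega$ denotes a random subset of $\{1,\dots,n\}$ in which each index is included independently with probability $\theta$, and $\bm q_\Omega$ is the subvector of $\bm q$ indexed by $\Omega$ (so $\|\bm q_\emptyset\|_2=0$). *)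

From Stdlib Require Import Reals Lra List.
Import ListNotations.
Open Scope R_scope.

(* Vectors of R^n are functions nat -> R; only indices 0..n-1 matter. *)
Definition rsum (n : nat) (f : nat -> R) : R :=
  fold_right Rplus 0 (map f (seq 0 n)).

Definition normsq (n : nat) (q : nat -> R) : R := rsum n (fun j => (q j)^2).

Definition e_vec (i : nat) : nat -> R := fun j => if Nat.eqb j i then 1 else 0.

(* minimum of g over indices 0..n-1 (meaningful for n >= 1) *)
Definition rmin_idx (n : nat) (g : nat -> R) : R :=
  fold_right Rmin (g 0%nat) (map g (seq 0 n)).

Definition rho (n : nat) (q : nat -> R) : R :=
  / 2 * rmin_idx n (fun i =>
     Rmin (normsq n (fun j => q j - e_vec i j))
          (normsq n (fun j => q j + e_vec i j))).

(* All subsets Omega of {0,...,n-1}, encoded as masks (list bool of length n):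
   index j is in Omega iff nth j m false = true. *)
Fixpoint masks (n : nat) : list (list bool) :=
  match n with
  | O => [nil]
  | S k => map (cons true) (masks k) ++ map (cons false) (masks k)
  end.

Definition mask_prob (theta : R) (m : list bool) : R :=
  fold_right Rmult 1 (map (fun b : bool => if b then theta else 1 - theta) m).

Definition bern_exp (n : nat) (theta : R) (F : list bool -> R) : R :=
  fold_right Rplus 0 (map (fun m => mask_prob theta m * F m) (masks n)).

Definition normsq_sub (n : nat) (m : list bool) (q : nat -> R) : R :=
  rsum n (fun j => if nth j m false then (q j)^2 else 0).

(* x^(p/2) for x >= 0 and integer p, written as (sqrt x)^p *)
Definition hpow (x : R) (p : nat) : R := (sqrt x) ^ p.

Definition C_const (eta : R) (p : nat) : R :=
  / (hpow (1 + eta^2) p + eta ^ p - 2 * hpow (0.5 + eta^2) p).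

(* Write X = ||q_Omega||^2 and f x = (x + eta^2)^(p/2), a convex function on [0, 1] which is
   strictly convex at 1/2 because p > 2.  Convexity on [0, 1/2] and on [1/2, 1] puts f below
   the parabola through (0, f 0), (1/2, f (1/2)), (1, f 1):
     f x <= (1 - x) f 0 + x f 1 - D x (1 - x),   D = f 1 + f 0 - 2 f (1/2) = 1 / C_{eta,p} > 0.
   Taking expectations, E X = theta and E X^2 = theta^2 + theta (1 - theta) sum_i q_i^4, so the
   bracket of the theorem is at least D theta (1 - theta) (1 - sum_i q_i^4).  Finally
   rho <= 1 - |q_i| <= 1 - q_i^2 for every i, and averaging with the weights q_i^2 gives
   rho <= 1 - sum_i q_i^4. *)
From Stdlib Require Import Reals Lra Lia List.
Open Scope R_scope.

Lemma pow_lt_pow_l (m : nat) (x y : R) : 0 <= x < y -> x ^ S m < y ^ S m.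
Proof.
  intros Hxy. induction m as [|m IH]; [simpl; lra|].
  change (x * x ^ S m < y * y ^ S m).
  assert (0 <= x ^ S m) by (apply pow_le; lra). nra.
Qed.

Lemma pow_sub_mul_pow_sub_nonneg (m : nat) (u v : R) :
  0 <= u -> 0 <= v -> 0 <= (v - u) * (v ^ m - u ^ m).
Proof.
  intros Hu Hv. destruct (Rle_dec u v) as [Huv | Huv].
  - assert (u ^ m <= v ^ m) by (apply pow_incr; lra). nra.
  - assert (v ^ m <= u ^ m) by (apply pow_incr; lra). nra.
Qed.

Lemma pow_sub_mul_pow_sub_pos (m : nat) (u v : R) :
  0 <= u -> 0 <= v -> u <> v -> 0 < (v - u) * (v ^ S m - u ^ S m).
Proof.
  intros Hu Hv Huv. destruct (Rlt_dec u v) as [Hlt | Hge].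
  - assert (u ^ S m < v ^ S m) by (apply pow_lt_pow_l; lra). nra.
  - assert (v ^ S m < u ^ S m) by (apply pow_lt_pow_l; lra). nra.
Qed.

Definition amgm_gap (k : nat) (u v : R) : R :=
  2 * v ^ S (S k) + INR k * u ^ S (S k) - INR (S (S k)) * u ^ k * v ^ 2.

Lemma amgm_gap_succ (k : nat) (u v : R) :
  amgm_gap (S k) u v =
  u * amgm_gap k u v + (v - u) * (v ^ S (S k) - u ^ S (S k))
  + v * ((v - u) * (v ^ S k - u ^ S k)).
Proof. unfold amgm_gap. rewrite !S_INR. simpl. ring. Qed.

Lemma amgm_gap_nonneg (k : nat) (u v : R) : 0 <= u -> 0 <= v -> 0 <= amgm_gap k u v.
Proof.
  intros Hu Hv. induction k as [|k IH].
  - unfold amgm_gap. simpl. lra.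
  - rewrite amgm_gap_succ.
    pose proof (pow_sub_mul_pow_sub_nonneg (S (S k)) u v Hu Hv).
    pose proof (pow_sub_mul_pow_sub_nonneg (S k) u v Hu Hv).
    assert (0 <= u * amgm_gap k u v) by (apply Rmult_le_pos; lra).
    assert (0 <= v * ((v - u) * (v ^ S k - u ^ S k))) by (apply Rmult_le_pos; lra).
    lra.
Qed.

Lemma amgm_gap_pos (k : nat) (u v : R) :
  0 <= u -> 0 <= v -> u <> v -> 0 < amgm_gap (S k) u v.
Proof.
  intros Hu Hv Huv. rewrite amgm_gap_succ.
  pose proof (pow_sub_mul_pow_sub_pos (S k) u v Hu Hv Huv).
  pose proof (pow_sub_mul_pow_sub_nonneg (S k) u v Hu Hv).
  assert (0 <= u * amgm_gap k u v) by (apply Rmult_le_pos; auto using amgm_gap_nonneg).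
  assert (0 <= v * ((v - u) * (v ^ S k - u ^ S k))) by (apply Rmult_le_pos; lra).
  lra.
Qed.

(* Tangent line of s |-> s^(k/2 + 1) at s; its defect is half an AM-GM gap. *)
Lemma hpow_tangent_gap (k : nat) (s s' : R) : 0 <= s -> 0 <= s' ->
  hpow s' (S (S k)) - (hpow s (S (S k)) + INR (S (S k)) / 2 * sqrt s ^ k * (s' - s))
  = amgm_gap k (sqrt s) (sqrt s') / 2.
Proof.
  intros Hs Hs'. unfold hpow, amgm_gap.
  replace (s' - s) with (sqrt s' ^ 2 - sqrt s ^ 2) by (rewrite !pow2_sqrt; lra).
  rewrite !S_INR. simpl. field.
Qed.

Lemma hpow_convex (k : nat) (l s1 s2 : R) : 0 <= l <= 1 -> 0 <= s1 -> 0 <= s2 ->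
  hpow (l * s1 + (1 - l) * s2) (S (S k))
  <= l * hpow s1 (S (S k)) + (1 - l) * hpow s2 (S (S k)).
Proof.
  intros Hl H1 H2.
  set (s := l * s1 + (1 - l) * s2).
  assert (Hs : 0 <= s) by (unfold s; nra).
  pose proof (hpow_tangent_gap k s s1 Hs H1) as T1.
  pose proof (hpow_tangent_gap k s s2 Hs H2) as T2.
  pose proof (amgm_gap_nonneg k (sqrt s) (sqrt s1) (sqrt_pos _) (sqrt_pos _)).
  pose proof (amgm_gap_nonneg k (sqrt s) (sqrt s2) (sqrt_pos _) (sqrt_pos _)).
  set (c := INR (S (S k)) / 2 * sqrt s ^ k) in *.
  assert (Hlin : l * (c * (s1 - s)) + (1 - l) * (c * (s2 - s)) = 0) by (unfold s; ring).
  nra.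
Qed.

Lemma hpow_midpoint_strict (k : nat) (s1 s2 : R) : 0 <= s1 -> 0 <= s2 -> s1 <> s2 ->
  2 * hpow ((s1 + s2) / 2) (S (S (S k))) < hpow s1 (S (S (S k))) + hpow s2 (S (S (S k))).
Proof.
  intros H1 H2 H12.
  set (s := (s1 + s2) / 2).
  assert (Hs : 0 <= s) by (unfold s; lra).
  assert (Hsqrt : sqrt s <> sqrt s1).
  { intro E. apply (f_equal (fun x => x ^ 2)) in E.
    rewrite !pow2_sqrt in E by lra. unfold s in E. lra. }
  pose proof (hpow_tangent_gap (S k) s s1 Hs H1).
  pose proof (hpow_tangent_gap (S k) s s2 Hs H2).
  pose proof (amgm_gap_pos k (sqrt s) (sqrt s1) (sqrt_pos _) (sqrt_pos _) Hsqrt).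
  pose proof (amgm_gap_nonneg (S k) (sqrt s) (sqrt s2) (sqrt_pos _) (sqrt_pos _)).
  assert (s1 - s + (s2 - s) = 0) by (unfold s; lra).
  set (c := INR (S (S (S k))) / 2 * sqrt s ^ S k) in *.
  nra.
Qed.

Lemma hpow_sqr (x : R) (p : nat) : 0 <= x -> hpow (x ^ 2) p = x ^ p.
Proof. intros Hx. unfold hpow. now rewrite sqrt_pow2. Qed.

Definition convex_on_unit (f : R -> R) : Prop :=
  forall l x y, 0 <= l <= 1 -> 0 <= x <= 1 -> 0 <= y <= 1 ->
  f (l * x + (1 - l) * y) <= l * f x + (1 - l) * f y.

Lemma hpow_shift_convex_on_unit (k : nat) (a : R) : 0 <= a ->
  convex_on_unit (fun x => hpow (x + a) (S (S k))).
Proof.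
  intros Ha l x y Hl Hx Hy.
  replace (l * x + (1 - l) * y + a) with (l * (x + a) + (1 - l) * (y + a)) by ring.
  apply hpow_convex; lra.
Qed.

Lemma hpow_shift_midpoint_defect_pos (k : nat) (a : R) : 0 <= a ->
  0 < hpow (1 + a) (S (S (S k))) + hpow (0 + a) (S (S (S k)))
      - 2 * hpow (/ 2 + a) (S (S (S k))).
Proof.
  intros Ha. pose proof (hpow_midpoint_strict k (1 + a) (0 + a)) as H.
  replace ((1 + a + (0 + a)) / 2) with (/ 2 + a) in H by field.
  apply Rlt_0_minus, H; lra.
Qed.

Section ParabolicChord.

Variable f : R -> R.
Hypothesis f_convex : convex_on_unit f.

(* f lies below its piecewise-linear interpolant at 0, 1/2, 1, which lies below this concave
   parabola since both agree at the three nodes. *)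
Lemma convex_le_parabolic_chord (x : R) : 0 <= x <= 1 ->
  f x <= (1 - x) * f 0 + x * f 1 - (f 1 + f 0 - 2 * f (/ 2)) * (x * (1 - x)).
Proof.
  intros Hx.
  assert (Hmid : f (/ 2) <= / 2 * f 1 + (1 - / 2) * f 0).
  { replace (/ 2) with (/ 2 * 1 + (1 - / 2) * 0) at 1 by lra. apply f_convex; lra. }
  set (D := f 1 + f 0 - 2 * f (/ 2)).
  assert (HD : 0 <= D) by (unfold D; lra).
  destruct (Rle_dec x (/ 2)).
  - assert (Hc : f x <= (1 - 2 * x) * f 0 + (1 - (1 - 2 * x)) * f (/ 2)).
    { replace x with ((1 - 2 * x) * 0 + (1 - (1 - 2 * x)) * / 2) at 1 by field.
      apply f_convex; lra. }
    assert (0 <= D * (x * x)) by (apply Rmult_le_pos; nra).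
    unfold D in *. nra.
  - assert (Hc : f x <= (2 - 2 * x) * f (/ 2) + (1 - (2 - 2 * x)) * f 1).
    { replace x with ((2 - 2 * x) * / 2 + (1 - (2 - 2 * x)) * 1) at 1 by field.
      apply f_convex; lra. }
    assert (0 <= D * ((1 - x) * (1 - x))) by (apply Rmult_le_pos; nra).
    unfold D in *. nra.
Qed.

End ParabolicChord.

Definition lsum {A : Type} (l : list A) (f : A -> R) : R := fold_right Rplus 0 (map f l).

Section ListSum.

Context {A : Type}.

Lemma lsum_plus (l : list A) (f g : A -> R) :
  lsum l (fun x => f x + g x) = lsum l f + lsum l g.
Proof. induction l as [|a l IH]; unfold lsum in *; simpl; [ring|]. rewrite IH; ring. Qed.

Lemma lsum_scal (l : list A) (c : R) (f : A -> R) :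
  lsum l (fun x => c * f x) = c * lsum l f.
Proof. induction l as [|a l IH]; unfold lsum in *; simpl; [ring|]. rewrite IH; ring. Qed.

Lemma lsum_ext_in (l : list A) (f g : A -> R) :
  (forall x, In x l -> f x = g x) -> lsum l f = lsum l g.
Proof. intros H. unfold lsum. f_equal. now apply map_ext_in. Qed.

Lemma lsum_le_in (l : list A) (f g : A -> R) :
  (forall x, In x l -> f x <= g x) -> lsum l f <= lsum l g.
Proof.
  induction l as [|a l IH]; intros H; unfold lsum in *; simpl; [lra|].
  apply Rplus_le_compat; [apply H; now left | apply IH; intros; apply H; now right].
Qed.

Lemma lsum_zero (l : list A) : lsum l (fun _ => 0) = 0.
Proof. induction l as [|a l IH]; unfold lsum in *; simpl; [ring|]. rewrite IH; ring. Qed.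

Lemma lsum_app (l l' : list A) (f : A -> R) : lsum (l ++ l') f = lsum l f + lsum l' f.
Proof. induction l as [|a l IH]; unfold lsum in *; simpl; [ring|]. rewrite IH; ring. Qed.

Lemma lsum_map {B : Type} (l : list B) (g : B -> A) (f : A -> R) :
  lsum (map g l) f = lsum l (fun x => f (g x)).
Proof. unfold lsum. now rewrite map_map. Qed.

End ListSum.

Lemma rsum_succ (n : nat) (f : nat -> R) : rsum (S n) f = f 0%nat + rsum n (fun j => f (S j)).
Proof.
  change (f 0%nat + lsum (seq 1 n) f = f 0%nat + lsum (seq 0 n) (fun j => f (S j))).
  now rewrite <- seq_shift, lsum_map.
Qed.

Lemma rsum_plus (n : nat) (f g : nat -> R) :
  rsum n (fun j => f j + g j) = rsum n f + rsum n g.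
Proof. apply lsum_plus. Qed.

Lemma rsum_scal (n : nat) (c : R) (f : nat -> R) : rsum n (fun j => c * f j) = c * rsum n f.
Proof. apply lsum_scal. Qed.

Lemma rsum_le (n : nat) (f g : nat -> R) :
  (forall j, f j <= g j) -> rsum n f <= rsum n g.
Proof. intros H. apply lsum_le_in. auto. Qed.

Lemma rsum_e_vec_mul (n i : nat) (c : nat -> R) : (i < n)%nat ->
  rsum n (fun j => e_vec i j * c j) = c i.
Proof.
  revert i c. induction n as [|n IH]; intros i c Hi; [lia|].
  rewrite rsum_succ. destruct i as [|i].
  - replace (rsum n (fun j => e_vec 0 (S j) * c (S j))) with 0.
    + unfold e_vec. simpl. ring.
    + rewrite <- (lsum_zero (seq 0 n)). apply lsum_ext_in. intros. unfold e_vec. simpl. ring.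
  - change (0 * c 0%nat + rsum n (fun j => e_vec i j * c (S j)) = c (S i)).
    rewrite (IH i (fun j => c (S j))) by lia. ring.
Qed.

Lemma normsq_nonneg (n : nat) (q : nat -> R) : 0 <= normsq n q.
Proof.
  rewrite <- (lsum_zero (seq 0 n)). apply lsum_le_in. intros. nra.
Qed.

Lemma normsq_add_e_vec (n i : nat) (q : nat -> R) (s : R) : (i < n)%nat ->
  normsq n (fun j => q j + s * e_vec i j) = normsq n q + 2 * s * q i + s ^ 2.
Proof.
  intros Hi. unfold normsq.
  transitivity (rsum n (fun j => q j ^ 2 + (2 * s * (e_vec i j * q j) + s ^ 2 * (e_vec i j * 1)))).
  - apply lsum_ext_in. intros j _. unfold e_vec. destruct (Nat.eqb j i); ring.
  - rewrite !rsum_plus, !rsum_scal, !rsum_e_vec_mul by exact Hi. ring.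
Qed.

Lemma coord_sqr_le_normsq (n i : nat) (q : nat -> R) : (i < n)%nat -> q i ^ 2 <= normsq n q.
Proof.
  intros Hi.
  pose proof (normsq_nonneg n (fun j => q j + (- q i) * e_vec i j)) as H.
  rewrite normsq_add_e_vec in H by exact Hi. nra.
Qed.

Lemma rmin_idx_le (n i : nat) (g : nat -> R) : (i < n)%nat -> rmin_idx n g <= g i.
Proof.
  intros Hi. unfold rmin_idx.
  assert (Hin : In i (seq 0 n)) by (apply in_seq; lia).
  induction (seq 0 n) as [|a l IH]; simpl in *; [tauto|].
  destruct Hin as [<- | Hin]; [apply Rmin_l | eapply Rle_trans; [apply Rmin_r | auto]].
Qed.

Lemma rho_le_one_sub_coord_sqr (n i : nat) (q : nat -> R) : (i < n)%nat ->
  normsq n q = 1 -> rho n q <= 1 - q i ^ 2.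
Proof.
  intros Hi Hq.
  assert (Hminus : normsq n (fun j => q j - e_vec i j) = 2 - 2 * q i).
  { transitivity (normsq n (fun j => q j + (-1) * e_vec i j)).
    - apply lsum_ext_in. intros. ring.
    - rewrite normsq_add_e_vec, Hq by exact Hi. ring. }
  assert (Hplus : normsq n (fun j => q j + e_vec i j) = 2 + 2 * q i).
  { transitivity (normsq n (fun j => q j + 1 * e_vec i j)).
    - apply lsum_ext_in. intros. ring.
    - rewrite normsq_add_e_vec, Hq by exact Hi. ring. }
  assert (Hrho : rho n q <= / 2 * Rmin (2 - 2 * q i) (2 + 2 * q i)).
  { unfold rho. apply Rmult_le_compat_l; [lra|]. rewrite <- Hminus, <- Hplus.
    apply (rmin_idx_le n i (fun i => Rmin (normsq n (fun j => q j - e_vec i j))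
                                         (normsq n (fun j => q j + e_vec i j)))), Hi. }
  pose proof (coord_sqr_le_normsq n i q Hi).
  pose proof (Rmin_l (2 - 2 * q i) (2 + 2 * q i)).
  pose proof (Rmin_r (2 - 2 * q i) (2 + 2 * q i)).
  destruct (Rle_dec 0 (q i)); nra.
Qed.

(* Average the previous bound with the weights q_j^2, which sum to 1. *)
Lemma rho_le_one_sub_sum_pow4 (n : nat) (q : nat -> R) :
  normsq n q = 1 -> rho n q <= 1 - rsum n (fun j => q j ^ 4).
Proof.
  intros Hq.
  replace (rho n q) with (rsum n (fun j => rho n q * q j ^ 2))
    by (rewrite rsum_scal; fold (normsq n q); rewrite Hq; ring).
  replace (1 - rsum n (fun j => q j ^ 4)) with (rsum n (fun j => q j ^ 2 + (-1) * q j ^ 4))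
    by (rewrite rsum_plus, rsum_scal; fold (normsq n q); rewrite Hq; ring).
  apply lsum_le_in. intros j Hj. apply in_seq in Hj.
  pose proof (rho_le_one_sub_coord_sqr n j q ltac:(lia) Hq).
  assert (0 <= q j ^ 2) by nra. nra.
Qed.

Section BernoulliExpectation.

Variable theta : R.
Hypothesis theta_range : 0 <= theta <= 1.

Lemma bern_exp_lsum (n : nat) (F : list bool -> R) :
  bern_exp n theta F = lsum (masks n) (fun m => mask_prob theta m * F m).
Proof. reflexivity. Qed.

Lemma bern_exp_succ (n : nat) (F : list bool -> R) : bern_exp (S n) theta F =
  theta * bern_exp n theta (fun m => F (true :: m))
  + (1 - theta) * bern_exp n theta (fun m => F (false :: m)).
Proof.
  rewrite !bern_exp_lsum. simpl masks. rewrite lsum_app, !lsum_map, <- !lsum_scal.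
  f_equal; apply lsum_ext_in; intros; unfold mask_prob; simpl; ring.
Qed.

Lemma bern_exp_ext (n : nat) (F G : list bool -> R) :
  (forall m, F m = G m) -> bern_exp n theta F = bern_exp n theta G.
Proof. intros H. apply lsum_ext_in. intros. now rewrite H. Qed.

Lemma bern_exp_plus (n : nat) (F G : list bool -> R) :
  bern_exp n theta (fun m => F m + G m) = bern_exp n theta F + bern_exp n theta G.
Proof. rewrite !bern_exp_lsum, <- lsum_plus. apply lsum_ext_in. intros. ring. Qed.

Lemma bern_exp_scal (n : nat) (c : R) (F : list bool -> R) :
  bern_exp n theta (fun m => c * F m) = c * bern_exp n theta F.
Proof. rewrite !bern_exp_lsum, <- lsum_scal. apply lsum_ext_in. intros. ring. Qed.

Lemma bern_exp_const (n : nat) (c : R) : bern_exp n theta (fun _ => c) = c.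
Proof.
  induction n as [|n IH].
  - unfold bern_exp, mask_prob. simpl. ring.
  - rewrite bern_exp_succ, IH. ring.
Qed.

Lemma mask_prob_nonneg (m : list bool) : 0 <= mask_prob theta m.
Proof.
  induction m as [|b m IH]; unfold mask_prob in *; simpl; [lra|].
  apply Rmult_le_pos; auto. destruct b; lra.
Qed.

Lemma bern_exp_le (n : nat) (F G : list bool -> R) :
  (forall m, F m <= G m) -> bern_exp n theta F <= bern_exp n theta G.
Proof.
  intros H. apply lsum_le_in. intros m _.
  apply Rmult_le_compat_l; [apply mask_prob_nonneg | apply H].
Qed.

Lemma normsq_sub_cons (n : nat) (b : bool) (m : list bool) (q : nat -> R) :
  normsq_sub (S n) (b :: m) q = (if b then q 0%nat ^ 2 else 0) + normsq_sub n m (fun j => q (S j)).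
Proof. unfold normsq_sub. now rewrite rsum_succ. Qed.

Lemma bern_exp_normsq_sub (n : nat) (q : nat -> R) :
  bern_exp n theta (fun m => normsq_sub n m q) = theta * normsq n q.
Proof.
  revert q. induction n as [|n IH]; intros q.
  - unfold bern_exp, mask_prob, normsq_sub, normsq, rsum. simpl. ring.
  - rewrite bern_exp_succ.
    rewrite (bern_exp_ext _ _ (fun m => q 0%nat ^ 2 + normsq_sub n m (fun j => q (S j))))
      by (intros; now rewrite normsq_sub_cons).
    rewrite (bern_exp_ext _ (fun m => normsq_sub (S n) (false :: m) q)
      (fun m => normsq_sub n m (fun j => q (S j)))) by (intros; rewrite normsq_sub_cons; ring).
    rewrite bern_exp_plus, bern_exp_const, IH.
    unfold normsq. rewrite rsum_succ. ring.
Qed.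

Lemma bern_exp_normsq_sub_sqr (n : nat) (q : nat -> R) :
  bern_exp n theta (fun m => normsq_sub n m q ^ 2) =
  theta ^ 2 * normsq n q ^ 2 + theta * (1 - theta) * rsum n (fun j => q j ^ 4).
Proof.
  revert q. induction n as [|n IH]; intros q.
  - unfold bern_exp, mask_prob, normsq_sub, normsq, rsum. simpl. ring.
  - rewrite bern_exp_succ.
    rewrite (bern_exp_ext _ _ (fun m => (q 0%nat ^ 2) ^ 2
        + (2 * q 0%nat ^ 2 * normsq_sub n m (fun j => q (S j))
           + normsq_sub n m (fun j => q (S j)) ^ 2)))
      by (intros; rewrite normsq_sub_cons; ring).
    rewrite (bern_exp_ext _ (fun m => normsq_sub (S n) (false :: m) q ^ 2)
      (fun m => normsq_sub n m (fun j => q (S j)) ^ 2)) by (intros; rewrite normsq_sub_cons; ring).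
    rewrite !bern_exp_plus, bern_exp_const, bern_exp_scal, bern_exp_normsq_sub, IH.
    unfold normsq. rewrite !rsum_succ. ring.
Qed.

Lemma bern_exp_normsq_sub_mul_compl (n : nat) (q : nat -> R) :
  bern_exp n theta (fun m => normsq_sub n m q * (normsq n q - normsq_sub n m q)) =
  theta * (1 - theta) * (normsq n q ^ 2 - rsum n (fun j => q j ^ 4)).
Proof.
  rewrite (bern_exp_ext _ _ (fun m => normsq n q * normsq_sub n m q + (-1) * normsq_sub n m q ^ 2))
    by (intros; ring).
  rewrite bern_exp_plus, !bern_exp_scal, bern_exp_normsq_sub, bern_exp_normsq_sub_sqr. ring.
Qed.

End BernoulliExpectation.

Lemma normsq_sub_range (n : nat) (m : list bool) (q : nat -> R) :
  0 <= normsq_sub n m q <= normsq n q.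
Proof.
  split.
  - rewrite <- (lsum_zero (seq 0 n)). apply rsum_le. intros j. destruct (nth j m false); nra.
  - apply rsum_le. intros j. destruct (nth j m false); nra.
Qed.

Lemma bern_exp_convex_normsq_sub_le (f : R -> R) (n : nat) (theta : R) (q : nat -> R) :
  0 <= theta <= 1 -> normsq n q = 1 -> convex_on_unit f ->
  bern_exp n theta (fun m => f (normsq_sub n m q)) <=
  theta * f 1 + (1 - theta) * f 0
  - (f 1 + f 0 - 2 * f (/ 2)) * (theta * (1 - theta)) * (1 - rsum n (fun j => q j ^ 4)).
Proof.
  intros Htheta Hq Hf.
  set (D := f 1 + f 0 - 2 * f (/ 2)).
  pose proof (bern_exp_normsq_sub theta n q) as Hmean.
  pose proof (bern_exp_normsq_sub_mul_compl theta n q) as Hvar.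
  rewrite Hq in Hmean, Hvar.
  etransitivity.
  - apply bern_exp_le; [exact Htheta|]. intros m. apply (convex_le_parabolic_chord f Hf).
    pose proof (normsq_sub_range n m q). lra.
  - apply Req_le. fold D.
    rewrite (bern_exp_ext theta n _ (fun m => f 0 + ((f 1 - f 0) * normsq_sub n m q
               + (- D) * (normsq_sub n m q * (1 - normsq_sub n m q))))) by (intros; ring).
    rewrite !bern_exp_plus, bern_exp_const, !bern_exp_scal, Hmean, Hvar. ring.
Qed.

Theorem mainTheorem11 (n p : nat) (theta eta : R) (q : nat -> R) :
  (1 <= n)%nat -> (2 < p)%nat -> 0 < theta < 1 -> 0 <= eta ->
  normsq n q = 1 ->
  rho n q <=
    C_const eta p / (theta * (1 - theta)) *
    (theta * hpow (1 + eta^2) p + (1 - theta) * eta ^ p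
     - bern_exp n theta (fun m => hpow (normsq_sub n m q + eta^2) p)).
Proof.
  intros _ Hp Htheta Heta Hq.
  destruct p as [|[|[|k]]]; try lia.
  assert (Heta2 : 0 <= eta ^ 2) by nra.
  pose proof (hpow_shift_midpoint_defect_pos k (eta ^ 2) Heta2) as HD.
  pose proof (bern_exp_convex_normsq_sub_le _ n theta q ltac:(lra) Hq
                (hpow_shift_convex_on_unit (S k) (eta ^ 2) Heta2)) as Hexp.
  pose proof (rho_le_one_sub_sum_pow4 n q Hq) as Hrho.
  cbv beta in Hexp. rewrite Rplus_0_l, hpow_sqr in HD, Hexp by exact Heta.
  unfold C_const. replace 0.5 with (/ 2) by lra.
  set (D := hpow (1 + eta ^ 2) _ + eta ^ _ - 2 * hpow (/ 2 + eta ^ 2) _) in *.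
  set (S4 := rsum n (fun j => q j ^ 4)) in *.
  assert (Htheta' : 0 < theta * (1 - theta)) by nra.
  apply Rle_trans with (/ D / (theta * (1 - theta)) * (D * (theta * (1 - theta)) * (1 - S4))).
  - replace (/ D / _ * _) with (1 - S4) by (field; lra). exact Hrho.
  - apply Rmult_le_compat_l; [|lra].
    apply Rmult_le_pos; left; apply Rinv_0_lt_compat; lra.
Qed.
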